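(* Let $\zeta_*\in(0,1]$, $\gamma_*\in(0,1]$, and $\nu_*=(1-\zeta_* )\delta_0+\zeta_*\delta_{\gamma_*}$. Then \[ \inf_{\nu:\ \nu((0,\infty))<\frac12\zeta_*}\|F_\nu-F_{\nu_*}\|_\infty\ \ge\ 0.01\,\gamma_*^2\zeta_*, \] where the infimum is over probability distributions $\nu$ on $\mathbb{R}$.
   Context: $\delta_x$ denotes the point mass at $x$. For a probability distribution $\nu$ on $\mathbb{R}$, $F_\nu(t):=\mathbb{P}_{\mu\sim\nu,\,X\sim\mathcal{N}(\mu,1)}(X\le t)$, and $\|\cdot\|_\infty$ is the sup norm over $t\in\mathbb{R}$. *)

From HB Require Import structures.
From mathcomp Require Import all_boot all_order all_algebra.
From mathcomp Require Import all_classical all_reals all_analysis.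
Set Implicit Arguments. Unset Strict Implicit. Unset Printing Implicit Defensive.
Import Order.TTheory GRing.Theory Num.Theory.
Local Open Scope classical_set_scope.
Local Open Scope ring_scope.

(* F_nu(t) = P_{mu ~ nu, X ~ N(mu,1)}(X <= t)
          = \int nu(dmu) P_{X ~ N(mu,1)}(X <= t). *)
Definition Fmix (R : realType) (nu : {measure set R -> \bar R}) (t : R) : R :=
  fine (\int[nu]_mu (normal_prob mu 1 `]-oo, t]))%E.

(* sup norm over t in R (extended-real valued, so always defined) *)
Definition supnorm (R : realType) (f : R -> R) : \bar R :=
  ereal_sup [set (`|f t|)%:E | t in [set: R]].

(* a real number viewed as a nonnegative number (used only with arguments
   that are nonnegative, where it is the identity) *)
Definition as_nng (R : realType) (x : R) : {nonneg R} := insubd (0%:nng) x.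

Definition nustar (R : realType) (z g : R) : {measure set R -> \bar R} :=
  measure_add (mscale (as_nng (1 - z)) (\d_(0:R)))
              (mscale (as_nng z) (\d_g)).

From HB Require Import structures.
From mathcomp Require Import all_boot all_order all_algebra.
From mathcomp Require Import all_classical all_reals all_analysis.
From mathcomp Require Import measurable_realfun lra ring.
Import Order.TTheory GRing.Theory Num.Theory.
Local Open Scope classical_set_scope.
Local Open Scope ring_scope.

(* Write Phi for the standard normal cdf and window s := Phi (s + 1) - Phi (s - 1)
   for the N(0,1)-mass of (s - 1, s + 1]; it decreases in |s|, and
   window 0 - window g >= g^2/25 for 0 < g <= 1.  For every mixing measure nu,
   F_nu(g + 1) - F_nu(g - 1) is the nu-average of window (g - mu).  For nu_* it is
   (1 - z) window g + z window 0, whereas a nu giving mass p < z/2 to (0, +oo)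
   averages at most p window 0 + (1 - p) window g, since window (g - mu) <= window g
   for mu <= 0.  The increments therefore differ by at least
   (z - p) (window 0 - window g) >= z g^2/50, so |F_nu - F_nu_*| >= z g^2/100
   at g - 1 or at g + 1. *)

Section normal_cdf.
Context {R : realType}.
Import numFieldTopology.Exports.

Local Notation phi := (@normal_pdf R 0 1).

Definition Phi (x : R) : R := fine (normal_prob 0 1 `]-oo, x]).

Definition window (s : R) : R := Phi (s + 1) - Phi (s - 1).

Lemma normal_pdf_le (m m' s x x' : R) : s != 0 ->
  (x' - m') ^+ 2 <= (x - m) ^+ 2 -> normal_pdf m s x <= normal_pdf m' s x'.
Proof.
move=> s0 d; rewrite /normal_pdf (negbTE s0) ler_wpM2l ?normal_peak_ge0 //.
by rewrite ler_expR !mulNr lerN2 ler_wpM2r ?invr_ge0 ?mulrn_wge0 ?sqr_ge0.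
Qed.

Lemma std_normal_pdfE (x : R) : phi x = normal_peak 1 * expR (- x ^+ 2 / 2).
Proof. by rewrite /normal_pdf oner_eq0 /normal_fun subr0 expr1n. Qed.

Lemma normal_prob_le (m m' s : R) (A : set R) : measurable A ->
  (forall x, A x -> normal_pdf m s x <= normal_pdf m' s x) ->
  (normal_prob m s A <= normal_prob m' s A)%E.
Proof.
move=> mA le_pdf; apply: ge0_le_integral => //.
- by move=> x _; rewrite lee_fin normal_pdf_ge0.
- by apply/measurable_EFinP; apply: measurable_funTS; exact: measurable_normal_pdf.
- by apply/measurable_EFinP; apply: measurable_funTS; exact: measurable_normal_pdf.
Qed.

Lemma normal_cdf_shift (m s t : R) : s != 0 ->
  normal_prob m s `]-oo, t] = normal_prob 0 s `]-oo, t - m].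
Proof.
move=> s0; rewrite /normal_prob.
have dshift : derive1 (fun x : R => x - m) = cst 1.
  by apply/funext => x; rewrite derive1E deriveB //= derive_id derive_cst subr0.
rewrite (@increasing_ge0_integration_by_substitutionNy R (fun x => x - m) (normal_pdf 0 s) t).
- apply: eq_integral => x _; rewrite !fctE dshift /= mulr1.
  by rewrite /normal_pdf (negbTE s0) /normal_fun subr0.
- by move=> x y _ _ xy; rewrite ltrD2r.
- by rewrite dshift => x _; exact: cvg_cst.
- by rewrite dshift; exact: is_cvg_cst.
- by rewrite dshift; exact: cvg_cst.
- split; first by move=> x _; apply: derivableB.
  by apply: cvg_at_left_filter; apply: cvgB; [exact: cvg_id | exact: cvg_cst].
- exact: cvg_addrr_Ny.
- exact/continuous_subspaceT/continuous_normal_pdf.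
- by move=> x _; exact: normal_pdf_ge0.
Qed.

Lemma fine_normal_cdfE (m t : R) : fine (normal_prob m 1 `]-oo, t]) = Phi (t - m).
Proof. by rewrite normal_cdf_shift ?oner_neq0. Qed.

Lemma fine_normal_prob_itv_oc (m a b : R) : a <= b ->
  fine (normal_prob m 1 `]a, b]) = Phi (b - m) - Phi (a - m).
Proof.
move=> ab; rewrite -!fine_normal_cdfE.
have -> : `]-oo, b]%classic = `]-oo, a] `|` `]a, b] :> set R.
  by rewrite -itv_bndbnd_setU // bnd_simp.
rewrite measureU //; last first.
  apply/seteqP; split => x //= [] /=; rewrite !in_itv /= => xa /andP[ax _].
  by move: (le_lt_trans xa ax); rewrite ltxx.
by rewrite [in RHS]fineD ?fin_num_measure // addrAC subrr add0r.
Qed.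

Lemma Phi_subE (a b : R) : a <= b -> Phi b - Phi a = fine (normal_prob 0 1 `]a, b]).
Proof. by move=> ab; rewrite fine_normal_prob_itv_oc // !subr0. Qed.

Lemma Phi_le (a b : R) : a <= b -> Phi a <= Phi b.
Proof. by move=> ab; rewrite -subr_ge0 Phi_subE // fine_ge0 // measure_ge0. Qed.

Lemma Phi_ge0 (x : R) : 0 <= Phi x.
Proof. by rewrite fine_ge0 // measure_ge0. Qed.

Lemma Phi_le1 (x : R) : Phi x <= 1.
Proof. by rewrite -lee_fin fineK ?fin_num_measure //; exact: probability_le1. Qed.

Lemma Phi_shift_le (a b d : R) : a <= b ->
  (forall x, a < x <= b -> x ^+ 2 <= (x + d) ^+ 2) ->
  Phi (b + d) - Phi (a + d) <= Phi b - Phi a.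
Proof.
move=> ab closer; have := @fine_normal_prob_itv_oc (- d) a b ab; rewrite !opprK => <-.
rewrite Phi_subE //; apply: fine_le; rewrite ?fin_num_measure //.
apply: normal_prob_le => // x; rewrite /= in_itv /= => /closer xd.
by apply: normal_pdf_le; rewrite ?oner_neq0 // subr0 opprK.
Qed.

Lemma integral_itv_oc_cst (a b c : R) : a <= b ->
  (\int[lebesgue_measure]_(x in `]a, b]) c%:E = ((b - a) * c)%:E)%E.
Proof.
move=> ab; rewrite integral_cst //.
have := lebesgue_measure_itv `]a, b]%R; rewrite /= => ->; rewrite lte_fin.
case: ltgtP ab => // [_ _|-> _]; first by rewrite -EFinD -EFinM mulrC.
by rewrite subrr mul0r mule0.
Qed.

Lemma Phi_sub_ge (a b c : R) : a <= b -> 0 <= c ->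
  (forall x, a < x <= b -> c <= phi x) -> (b - a) * c <= Phi b - Phi a.
Proof.
move=> ab c0 le_c; rewrite Phi_subE // -lee_fin fineK ?fin_num_measure //.
rewrite -integral_itv_oc_cst //; apply: ge0_le_integral => //.
by apply/measurable_EFinP; apply: measurable_funTS; exact: measurable_normal_pdf.
Qed.

Lemma Phi_sub_le (a b c : R) : a <= b ->
  (forall x, a < x <= b -> phi x <= c) -> Phi b - Phi a <= (b - a) * c.
Proof.
move=> ab le_c; rewrite Phi_subE // -lee_fin fineK ?fin_num_measure //.
rewrite -integral_itv_oc_cst //; apply: ge0_le_integral => //.
- by move=> x _; rewrite lee_fin normal_pdf_ge0.
- by apply/measurable_EFinP; apply: measurable_funTS; exact: measurable_normal_pdf.
Qed.

Lemma window_ge0 (s : R) : 0 <= window s.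
Proof. by rewrite subr_ge0 Phi_le // lerD2l; lra. Qed.

Lemma window_le1 (s : R) : window s <= 1.
Proof. by have := Phi_le1 (s + 1); have := Phi_ge0 (s - 1); rewrite /window; lra. Qed.

Lemma window_le_of_ge0 (s s' : R) : 0 <= s -> s <= s' -> window s' <= window s.
Proof.
move=> s0 ss'; rewrite /window.
have : Phi (s' - 1 + 2) - Phi (s - 1 + 2) <= Phi (s' - 1) - Phi (s - 1).
  by apply: Phi_shift_le => [|x /andP[x1 _]]; [lra | nra].
by rewrite (_ : s' - 1 + 2 = s' + 1) 1?(_ : s - 1 + 2 = s + 1); lra.
Qed.

Lemma window_le_of_le0 (s s' : R) : s <= 0 -> s' <= s -> window s' <= window s.
Proof.
move=> s0 s's; rewrite /window.
have : Phi (s + 1 + -2) - Phi (s' + 1 + -2) <= Phi (s + 1) - Phi (s' + 1).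
  by apply: Phi_shift_le => [|x /andP[_ x1]]; [lra | nra].
by rewrite (_ : s + 1 + -2 = s - 1) 1?(_ : s' + 1 + -2 = s' - 1); lra.
Qed.

Lemma window_le_window0 (s : R) : window s <= window 0.
Proof.
by case: (lerP 0 s) => s0; [apply: window_le_of_ge0 | apply: window_le_of_le0; lra].
Qed.

Lemma normal_peak1_ge : 1 / 3 <= normal_peak (1 : R).
Proof.
rewrite /normal_peak expr1n !mul1r; set s := Num.sqrt _.
have pi4 : pi < 4 :> R by have := @pihalf_lt2 R; lra.
have s2 : s ^+ 2 = pi + pi by rewrite sqr_sqrtr -?mulr2n // mulrn_wge0 // ltW // pi_gt0.
have s0 : 0 < s by rewrite sqrtr_gt0 mulrn_wgt0 // pi_gt0.
rewrite expr2 in s2; rewrite ler_pV2 ?inE ?unitfE ?gt_eqF //=; nra.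
Qed.

Lemma std_normal_pdf_3half_ge : 2 / 25 <= phi (3 / 2).
Proof.
rewrite std_normal_pdfE (_ : - (3 / 2) ^+ 2 / 2 = - (9 / 32) * 4%:R :> R); last first.
  by rewrite expr2; lra.
rewrite expRM_natr; set e := expR _.
have e1 : 23 / 32 <= e by have := expR_ge1Dx (- (9 / 32) : R); rewrite -/e; lra.
have e2 : 51 / 100 <= e ^+ 2 by rewrite expr2; nra.
have e4 : 24 / 100 <= e ^+ 4 by rewrite (exprM e 2 2) [X in X ^+ 2]expr2 expr2; nra.
by have := normal_peak1_ge; nra.
Qed.

Lemma window_gap (g : R) : 0 < g -> g <= 1 ->
  g ^+ 2 / 2 * phi (3 / 2) <= window 0 - window g.
Proof.
(* Moving the window from (-1, 1] to (g - 1, g + 1] loses (-1, g - 1] and gains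
   (1, g + 1].  Split both at h = g/2: the gain on (1, 1 + h] is at most the loss on
   (-1, h - 1], and on the other halves the loss exceeds the gain by at least
   h (phi (1 - h) - phi (1 + h)) = h phi (1 + h) (e^(2h) - 1) >= 2 h^2 phi (3/2). *)
move=> g0 g1; set h := g / 2.
have h0 : 0 < h by rewrite /h; lra.
have gh : g = h + h by rewrite /h; lra.
have near : Phi (h - 1 + 2) - Phi (-1 + 2) <= Phi (h - 1) - Phi (-1).
  by apply: Phi_shift_le => [|x /andP[x1 _]]; [lra | nra].
have far_lo : (g - 1 - (h - 1)) * phi (1 - h) <= Phi (g - 1) - Phi (h - 1).
  apply: Phi_sub_ge => [||x /andP[x1 x2]]; [lra | exact: normal_pdf_ge0 |].
  by apply: normal_pdf_le; rewrite ?oner_neq0 // !subr0; nra.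
have far_hi : Phi (g + 1) - Phi (h - 1 + 2) <= (g + 1 - (h - 1 + 2)) * phi (1 + h).
  apply: Phi_sub_le => [|x /andP[x1 x2]]; first lra.
  by apply: normal_pdf_le; rewrite ?oner_neq0 // !subr0; nra.
have tails : phi (1 - h) = phi (1 + h) * expR (2 * h).
  by rewrite !std_normal_pdfE -mulrA -expRD; congr (_ * expR _); rewrite !expr2; lra.
have convex : 1 + 2 * h <= expR (2 * h) by exact: expR_ge1Dx.
have mid : phi (3 / 2) <= phi (1 + h).
  by apply: normal_pdf_le; rewrite ?oner_neq0 // !subr0; nra.
rewrite /window add0r sub0r (_ : g ^+ 2 = 4 * h * h); last by rewrite gh expr2; lra.
rewrite tails in far_lo; rewrite (_ : -1 + 2 = 1) in near; last lra.
have : h * phi (1 + h) * (2 * h) <= h * phi (1 + h) * (expR (2 * h) - 1).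
  by apply: ler_wpM2l; [apply: mulr_ge0; [lra | exact: normal_pdf_ge0] | lra].
nra.
Qed.

Lemma window_gap_ge (g : R) : 0 < g -> g <= 1 -> g ^+ 2 / 25 <= window 0 - window g.
Proof.
move=> g0 g1; apply: le_trans _ (window_gap g g0 g1).
have g2 : 0 <= g ^+ 2 / 2 by rewrite divr_ge0 ?sqr_ge0.
by have := ler_wpM2l g2 std_normal_pdf_3half_ge; lra.
Qed.

End normal_cdf.

Section gaussian_mixture.
Context {R : realType}.

Lemma FmixE (nu : {measure set R -> \bar R}) (t : R) :
  Fmix nu t = fine (\int[nu]_mu (Phi (t - mu))%:E)%E.
Proof.
rewrite /Fmix; congr fine; apply: eq_integral => mu _.
by rewrite -fine_normal_cdfE fineK ?fin_num_measure.
Qed.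

Lemma measurable_Phi_sub (t : R) : measurable_fun setT (fun mu : R => Phi (t - mu)).
Proof. by apply: nonincreasing_measurable => // x y xy; apply: Phi_le; lra. Qed.

Lemma measurable_window_sub (t : R) :
  measurable_fun setT (fun mu : R => window (t - mu)).
Proof.
by apply: measurable_funB; apply: nonincreasing_measurable => // x y xy; apply: Phi_le; lra.
Qed.

Lemma integral_fin_num_01 (nu : probability R R) (f : R -> R) :
  measurable_fun setT f -> (forall x, 0 <= f x <= 1) ->
  (\int[nu]_x (f x)%:E)%E \is a fin_num.
Proof.
move=> mf f01; have f0 x : (0 <= (f x)%:E)%E by rewrite lee_fin; case/andP: (f01 x).
rewrite ge0_fin_numE; last exact: integral_ge0.
apply: (@le_lt_trans _ _ (\int[nu]_x (cst 1%:E x))%E); last first.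
  by rewrite integral_cst // mul1e (le_lt_trans (probability_le1 nu measurableT)) ?ltry.
apply: ge0_le_integral => //; first exact/measurable_EFinP.
by move=> x _; rewrite lee_fin; case/andP: (f01 x).
Qed.

Lemma Fmix_increment (nu : probability R R) (t : R) :
  Fmix nu (t + 1) - Fmix nu (t - 1) = fine (\int[nu]_mu (window (t - mu))%:E)%E.
Proof.
rewrite !FmixE.
have -> : (\int[nu]_mu (Phi (t + 1 - mu))%:E = \int[nu]_mu (Phi (t - 1 - mu))%:E
                                              + \int[nu]_mu (window (t - mu))%:E)%E.
  rewrite -ge0_integralD //.
  - apply: eq_integral => mu _; rewrite -EFinD /window (addrAC t 1) (addrAC t (-1)).
    by rewrite addrCA subrr addr0.
  - by move=> x _; rewrite lee_fin Phi_ge0.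
  - by apply/measurable_EFinP; exact: measurable_Phi_sub.
  - by move=> x _; rewrite lee_fin window_ge0.
  - by apply/measurable_EFinP; exact: measurable_window_sub.
rewrite fineD; first by rewrite addrAC subrr add0r.
- apply: integral_fin_num_01 => [|x]; first exact: measurable_Phi_sub.
  by rewrite Phi_ge0 Phi_le1.
- apply: integral_fin_num_01 => [|x]; first exact: measurable_window_sub.
  by rewrite window_ge0 window_le1.
Qed.

Lemma ge0_integral_le_setC (nu : probability R R) (A : set R) (f : R -> R) (a b : R) :
  measurable A -> measurable_fun setT f -> (forall x, 0 <= f x) ->
  (forall x, A x -> f x <= a) -> (forall x, ~ A x -> f x <= b) ->
  (\int[nu]_x (f x)%:E <= (a * fine (nu A) + b * (1 - fine (nu A)))%:E)%E.
Proof.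
move=> mA mf f0 fA fAC.
have bound (D : set R) c : measurable D -> (forall x, D x -> f x <= c) ->
    (\int[nu]_(x in D) (f x)%:E <= (c * fine (nu D))%:E)%E.
  move=> mD fD; rewrite EFinM fineK ?fin_num_measure // -integral_cst //.
  apply: ge0_le_integral => //.
  - by move=> x _; rewrite lee_fin.
  - exact/measurable_EFinP/measurable_funTS.
have nuC : 1 - fine (nu A) = fine (nu (~` A)).
  by rewrite probability_setC // fineB ?fin_num_measure.
rewrite -(setUv A) ge0_integral_setU //.
- by rewrite EFinD nuC leeD // bound //; exact: measurableC.
- exact: measurableC.
- by rewrite setUv; exact/measurable_EFinP.
- by move=> x _; rewrite lee_fin.
- by rewrite /disj_set setICr.
Qed.

Lemma Fmix_increment_le (nu : probability R R) (g : R) : 0 <= g ->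
  Fmix nu (g + 1) - Fmix nu (g - 1) <=
    window 0 * fine (nu `]0, +oo[%classic) + window g * (1 - fine (nu `]0, +oo[%classic)).
Proof.
move=> g0; rewrite Fmix_increment -lee_fin fineK; last first.
  apply: integral_fin_num_01 => [|x]; first exact: measurable_window_sub.
  by rewrite window_ge0 window_le1.
apply: ge0_integral_le_setC.
- exact: measurable_itv.
- exact: measurable_window_sub.
- by move=> x; exact: window_ge0.
- by move=> x _; exact: window_le_window0.
- move=> x; rewrite /= in_itv /= andbT => /negP; rewrite -leNgt => x0.
  by apply: window_le_of_ge0; lra.
Qed.

Lemma as_nngE (x : R) : 0 <= x -> (as_nng x)%:num = x.
Proof.
by move=> x0; rewrite /as_nng insubdK // unfold_in /= /Itv.num_sem /= num_real /= in_itv /= x0.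
Qed.

Lemma integral_nustar (z g : R) (f : R -> R) : 0 <= z -> z <= 1 ->
  measurable_fun setT f -> (forall x, 0 <= f x) ->
  (\int[nustar z g]_mu (f mu)%:E = ((1 - z) * f 0 + z * f g)%:E)%E.
Proof.
move=> z0 z1 mf f0.
have mfE : measurable_fun setT (fun x => (f x)%:E) by exact/measurable_EFinP.
have f0E x : setT x -> (0 <= (f x)%:E)%E by rewrite lee_fin.
rewrite /nustar ge0_integral_measure_add // !ge0_integral_mscale //.
by rewrite !integral_dirac // !diracT !mul1e !as_nngE // subr_ge0.
Qed.

Lemma Fmix_nustar_increment (z g : R) : 0 <= z -> z <= 1 ->
  Fmix (nustar z g) (g + 1) - Fmix (nustar z g) (g - 1) = (1 - z) * window g + z * window 0.
Proof.
move=> z0 z1; rewrite !FmixE !integral_nustar //; try exact: measurable_Phi_sub;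
  try by move=> x; exact: Phi_ge0.
by rewrite /window /= !subr0 (addrC (g + 1)) (addrC (g - 1)) !addKr add0r sub0r; ring.
Qed.

Lemma supnorm_sub_ge (F G : R -> R) (a b x : R) :
  2 * x <= (G b - G a) - (F b - F a) -> (x%:E <= supnorm (fun t => (F t - G t)%R))%E.
Proof.
move=> incr; have sup_ge t : ((`|F t - G t|)%:E <= supnorm (fun t => (F t - G t)%R))%E.
  by apply: ereal_sup_ubound; exists t.
have [xa | xb] : x <= `|F a - G a| \/ x <= `|F b - G b|.
  case: (lerP x `|F a - G a|) => [|lt_xa]; [by left | right].
  by have := ler_norm (- (F b - G b)); rewrite normrN; have := ler_norm (F a - G a); lra.
- by apply: le_trans (sup_ge a); rewrite lee_fin.
- by apply: le_trans (sup_ge b); rewrite lee_fin.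
Qed.

End gaussian_mixture.

Theorem lemma5 (R : realType) (zeta gamma : R) :
  0 < zeta -> zeta <= 1 -> 0 < gamma -> gamma <= 1 ->
  forall nu : probability R R,
    (nu `]0%R, +oo[%classic < (zeta / 2)%:E)%E ->
    ((1 / 100 * gamma ^+ 2 * zeta)%R%:E <=
       supnorm (fun t => (Fmix nu t - Fmix (nustar zeta gamma) t)%R))%E.
Proof.
move=> z0 z1 g0 g1 nu nu_pos.
set p := fine (nu `]0, +oo[%classic).
have p0 : 0 <= p by rewrite fine_ge0 // measure_ge0.
have pz : p < zeta / 2 by rewrite -lte_fin fineK ?fin_num_measure.
have key : zeta / 2 * (gamma ^+ 2 / 25) <= (zeta - p) * (window 0 - window gamma).
  apply: ler_pM; [lra | by rewrite divr_ge0 ?sqr_ge0 | lra | exact: window_gap_ge].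
apply: (supnorm_sub_ge _ _ (gamma - 1) (gamma + 1)).
rewrite Fmix_nustar_increment ?(ltW z0) //.
apply: le_trans _ (lerB (lexx _) (Fmix_increment_le nu gamma (ltW g0))).
by rewrite -/p; lra.
Qed.
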